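(* Let $a_1,a_2,b_1,b_2>0$, set $a:=\min\{a_1+1,a_2\}$, $b:=\min\{b_2+1,b_1\}$, $c:=\min\{a_1,a_2,b_1,b_2\}$, and assume $c>1$, $\max\{a,b\}<c+1$ and $a\le b$. Let $k_0\ge 6$ be an integer such that $b<c-1+2\cos\frac{\pi}{k_0}$. Then for every integer $k\ge k_0$ there exists a sequence $(m_i,n_i)_{i\in\mathbb N}$ of positive integers such that $(m_i,n_i,k)$ is admissible for every $i$.
   Context: A triplet of positive integers $(m,n,k)$ with $k\ge k_0$ is called admissible if $\mu(m,n,k):=\frac{2m\sin\frac\pi k+1}{2n}$ satisfies \[\max\Big\{\tfrac1a,\tfrac12,\tfrac{1}{a-b+2\cos\frac\pi k}\Big\}<\mu(m,n,k)<\tfrac{1}{a+1-c}.\] *)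

From Stdlib Require Import Reals Lra Lia.
Open Scope R_scope.

Definition mu (m n k : nat) : R :=
  (2 * INR m * sin (PI / INR k) + 1) / (2 * INR n).

Definition admissible (a b c : R) (k0 m n k : nat) : Prop :=
  (0 < m)%nat /\ (0 < n)%nat /\ (0 < k)%nat /\ (k0 <= k)%nat /\
  Rmax (Rmax (1 / a) (1 / 2)) (1 / (a - b + 2 * cos (PI / INR k))) < mu m n k /\
  mu m n k < 1 / (a + 1 - c).

(* The admissibility condition asks that mu(m,n,k) = (2 m s + 1) / (2 n), with s = sin(pi/k) > 0,
   lie in an open window (L, U).  The hypotheses make this window nonempty with L > 0, using
   cos(pi/k) >= cos(pi/k0).  For fixed n the values of mu are spaced s/n apart as m varies, so
   once n (U - L) > s and 2 n L > 1 some positive m puts mu(m,n,k) inside the window; letting n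
   run over all large integers gives infinitely many distinct pairs (m, n). *)
From Stdlib Require Import Reals Lra Lia ZArith.
Open Scope R_scope.

Definition nat_above (x : R) : nat := Z.to_nat (up x).

Lemma nat_above_spec (x : R) : 0 <= x -> x < INR (nat_above x) <= x + 1.
Proof.
  intros Hx.
  destruct (archimed x) as [Hup1 Hup2].
  assert (Hnat : INR (nat_above x) = IZR (up x)).
  { unfold nat_above. rewrite INR_IZR_INZ, Z2Nat.id; [reflexivity|].
    apply le_IZR. lra. }
  rewrite Hnat. lra.
Qed.

Lemma PI_div_INR_le (k0 k : nat) :
  (1 <= k0)%nat -> (k0 <= k)%nat -> PI / INR k <= PI / INR k0.
Proof.
  intros Hk0 Hk.
  assert (Hk0r : 1 <= INR k0) by (apply (le_INR 1); exact Hk0).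
  unfold Rdiv. apply Rmult_le_compat_l; [left; exact PI_RGT_0|].
  apply Rinv_le_contravar; [lra | apply le_INR; exact Hk].
Qed.

Lemma PI_div_INR_pos (k : nat) : (1 <= k)%nat -> 0 < PI / INR k.
Proof.
  intros Hk. apply Rdiv_lt_0_compat; [exact PI_RGT_0|].
  apply lt_0_INR. exact Hk.
Qed.

Lemma cos_PI_div_INR_le (k0 k : nat) :
  (1 <= k0)%nat -> (k0 <= k)%nat -> cos (PI / INR k0) <= cos (PI / INR k).
Proof.
  intros Hk0 Hk.
  assert (HPI0 : PI / INR k0 <= PI / INR 1) by (apply PI_div_INR_le; lia).
  assert (HPI : PI / INR k <= PI / INR k0) by (apply PI_div_INR_le; assumption).
  pose proof (PI_div_INR_pos k0 Hk0).
  pose proof (PI_div_INR_pos k ltac:(lia)).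
  replace (PI / INR 1) with PI in HPI0 by (simpl; field).
  apply cos_decr_1; lra.
Qed.

Lemma sin_PI_div_INR_pos (k : nat) : (2 <= k)%nat -> 0 < sin (PI / INR k).
Proof.
  intros Hk.
  assert (Hhalf : PI / INR k <= PI / INR 2) by (apply PI_div_INR_le; lia).
  replace (INR 2) with 2 in Hhalf by (simpl; lra).
  pose proof PI_RGT_0.
  apply sin_gt_0; [apply PI_div_INR_pos; lia | lra].
Qed.

Lemma admissible_window (a b c t : R) :
  c <= a -> 1 < c -> a < c + 1 -> b < c - 1 + 2 * t ->
  0 < Rmax (Rmax (1 / a) (1 / 2)) (1 / (a - b + 2 * t)) < 1 / (a + 1 - c).
Proof.
  intros Hca Hc Hac Hb. split.
  - eapply Rlt_le_trans; [|apply Rmax_l].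
    eapply Rlt_le_trans; [|apply Rmax_r]. lra.
  - repeat apply Rmax_lub_lt;
      unfold Rdiv; rewrite !Rmult_1_l;
      apply Rinv_lt_contravar; try apply Rmult_lt_0_compat; lra.
Qed.

(* The least m with (2 m s + 1) / (2 n) > L. *)
Definition m_above (L s : R) (n : nat) : nat :=
  nat_above ((2 * INR n * L - 1) / (2 * s)).

Lemma m_above_spec (L U s : R) (n : nat) :
  0 < L -> 0 < s -> 1 < 2 * INR n * L -> s < INR n * (U - L) ->
  (0 < m_above L s n)%nat /\
  L < (2 * INR (m_above L s n) * s + 1) / (2 * INR n) < U.
Proof.
  intros HL Hs Hlow Hgap.
  set (x := (2 * INR n * L - 1) / (2 * s)).
  assert (Hx : 0 < x) by (unfold x; apply Rdiv_lt_0_compat; lra).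
  assert (Hsx : 2 * s * x = 2 * INR n * L - 1) by (unfold x; field; lra).
  destruct (nat_above_spec x (Rlt_le _ _ Hx)) as [Hm1 Hm2].
  unfold m_above; fold x.
  set (m := nat_above x) in *.
  assert (Hn : 0 < INR n) by nra.
  split; [apply INR_lt; simpl; lra|].
  split; apply Rmult_lt_reg_r with (2 * INR n); try lra;
    unfold Rdiv; rewrite Rmult_assoc, Rinv_l by lra; nra.
Qed.

Lemma m_above_window_eventually (L U s : R) :
  0 < L -> 0 < s -> L < U ->
  exists N : nat, forall n : nat, (N <= n)%nat ->
    (0 < n)%nat /\ (0 < m_above L s n)%nat /\
    L < (2 * INR (m_above L s n) * s + 1) / (2 * INR n) < U.
Proof.
  intros HL Hs HLU.
  set (y := Rmax (1 / (2 * L)) (s / (U - L))).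
  assert (Hy1 : 1 / (2 * L) <= y) by apply Rmax_l.
  assert (Hy2 : s / (U - L) <= y) by apply Rmax_r.
  assert (Hy : 0 < y) by (eapply Rlt_le_trans; [|exact Hy2]; apply Rdiv_lt_0_compat; lra).
  exists (nat_above y). intros n Hn.
  assert (HyN : y < INR n).
  { destruct (nat_above_spec y (Rlt_le _ _ Hy)) as [HyN _].
    apply le_INR in Hn. lra. }
  assert (Hlow : 1 < 2 * INR n * L).
  { assert (1 / (2 * L) * (2 * L) = 1) by (field; lra). nra. }
  assert (Hgap : s < INR n * (U - L)).
  { assert (s / (U - L) * (U - L) = s) by (field; lra). nra. }
  split; [apply INR_lt; simpl; lra|].
  apply (m_above_spec L U s n HL Hs Hlow Hgap).
Qed.

Theorem lemma2p2 (a1 a2 b1 b2 : R) (k0 : nat) :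
  0 < a1 -> 0 < a2 -> 0 < b1 -> 0 < b2 ->
  let a := Rmin (a1 + 1) a2 in
  let b := Rmin (b2 + 1) b1 in
  let c := Rmin (Rmin a1 a2) (Rmin b1 b2) in
  1 < c -> Rmax a b < c + 1 -> a <= b ->
  (6 <= k0)%nat ->
  b < c - 1 + 2 * cos (PI / INR k0) ->
  forall k : nat, (k0 <= k)%nat ->
  exists s : nat -> nat * nat,
    (forall i j, s i = s j -> i = j) /\
    (forall i, admissible a b c k0 (fst (s i)) (snd (s i)) k).
Proof.
  intros Ha1 Ha2 Hb1 Hb2 a b c Hc Hmax _ Hk0 Hb k Hk.
  assert (Hca : c <= a).
  { pose proof (Rmin_l (Rmin a1 a2) (Rmin b1 b2)).
    pose proof (Rmin_l a1 a2). pose proof (Rmin_r a1 a2).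
    unfold a, c; apply Rmin_glb; lra. }
  assert (Hac : a < c + 1) by (apply Rmax_Rlt in Hmax; tauto).
  pose proof (cos_PI_div_INR_le k0 k ltac:(lia) Hk) as Hcos.
  pose proof (sin_PI_div_INR_pos k ltac:(lia)) as Hsin.
  set (L := Rmax (Rmax (1 / a) (1 / 2)) (1 / (a - b + 2 * cos (PI / INR k)))).
  destruct (admissible_window a b c (cos (PI / INR k)) Hca Hc Hac ltac:(lra))
    as [HL HLU].
  destruct (m_above_window_eventually L _ _ HL Hsin HLU) as [N HN].
  exists (fun i => (m_above L (sin (PI / INR k)) (N + i), (N + i)%nat)).
  split.
  - intros i j Hij. injection Hij. lia.
  - intros i. destruct (HN (N + i)%nat ltac:(lia)) as (Hn & Hm & Hlo & Hhi).
    unfold admissible, mu; simpl.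
    repeat split; try assumption; lia.
Qed.
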